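(* Define $\pi:L_\infty(0,\infty)\to\mathbb{R}$ by $\pi(y)=\limsup_{N\to\infty}\frac1{\log(\log N)}\int_N^{N\log N}\frac{y(s)}{s}ds$. (1) If $\omega\in L_\infty(0,\infty)^*$ satisfies $\omega(y)\le\pi(y)$ for all $y\in L_\infty(0,\infty)$, then $\omega$ is a dilation invariant generalised limit. (2) If $x\in L_\infty(0,\infty)$ is positive and $\pi(x)>0$, then there exists a dilation invariant generalised limit $\omega$ such that $\omega(x)>0$.
   Context: Functions are real-valued. A generalised limit on $L_\infty(0,\infty)$ is a positive linear functional $\omega$ with $\omega(1)=1$ and $\omega(y)=0$ whenever $y(t)\to0$ as $t\to\infty$; it is dilation invariant if $\omega(\sigma_ny)=\omega(y)$ for all $n\in\mathbb{N}$ and $y$, where $(\sigma_ny)(t)=y(t/n)$. *)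

From HB Require Import structures.
From mathcomp Require Import all_boot all_order all_algebra.
From mathcomp Require Import all_classical all_reals all_analysis.
Set Implicit Arguments. Unset Strict Implicit. Unset Printing Implicit Defensive.
Import Order.TTheory GRing.Theory Num.Theory.
Import numFieldNormedType.Exports.
Local Open Scope classical_set_scope.
Local Open Scope ring_scope.

Section Defs.
Variable R : realType.
Local Notation mu := (@lebesgue_measure R).

Definition ae_pos (P : R -> Prop) : Prop := {ae mu, forall t, 0 < t -> P t}.

(* Representatives of elements of L_oo(0,oo): measurable on (0,oo) and
   essentially bounded there.  Only values on (0,oo) matter. *)
Definition Linf (y : R -> R) : Prop :=
  measurable_fun (`]0, +oo[ : set R) y /\ exists C : R, ae_pos (fun t => `|y t| <= C).

Definition aeeq (y1 y2 : R -> R) : Prop := ae_pos (fun t => y1 t = y2 t).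

(* a (well-defined on classes) linear functional on L_oo(0,oo) *)
Definition Linf_linear (w : (R -> R) -> R) : Prop :=
  (forall y1 y2, Linf y1 -> Linf y2 -> aeeq y1 y2 -> w y1 = w y2) /\
  (forall (a : R) y1 y2, Linf y1 -> Linf y2 ->
      w (fun t => a * y1 t + y2 t) = a * w y1 + w y2).

Definition Linf_dual (w : (R -> R) -> R) : Prop :=
  Linf_linear w /\
  exists C : R, forall y (M : R), Linf y -> ae_pos (fun t => `|y t| <= M) ->
      `|w y| <= C * M.

Definition vanishes_at_infty (y : R -> R) : Prop :=
  forall e : R, 0 < e -> exists T : R, ae_pos (fun t => T < t -> `|y t| <= e).

Definition gen_limit (w : (R -> R) -> R) : Prop :=
  Linf_linear w /\
  (forall y, Linf y -> ae_pos (fun t => 0 <= y t) -> 0 <= w y) /\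
  w (fun _ => 1) = 1 /\
  (forall y, Linf y -> vanishes_at_infty y -> w y = 0).

Definition dilation (n : nat) (y : R -> R) : R -> R := fun t => y (t / n%:R).

Definition dilation_invariant (w : (R -> R) -> R) : Prop :=
  forall (n : nat) y, (0 < n)%N -> Linf y -> w (dilation n y) = w y.

Definition pi_avg (y : R -> R) (N : R) : R :=
  (ln (ln N))^-1 * Rintegral mu (`[N, N * ln N] : set R) (fun s => y s / s).

Definition pi_fun (y : R -> R) : \bar R :=
  limf_esup (fun N => (pi_avg y N)%:E) (+oo%R : set_system R).

End Defs.

(* Write logint y a b for \int_a^b y(s)/s ds, so that
   pi_avg y N = logint y N (N ln N) / ln (ln N).  For large N this average is linear,
   monotone and normalised (logint 1 a b = ln b - ln a), and it is asymptotically
   insensitive to dilations: logint (sigma_n y) a b = logint y (a/n) (b/n) differs from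
   logint y a b by two integrals over intervals of logarithmic length ln n, which is
   o(ln ln N).  Hence every linear w such that "pi_avg y N <= c for large N" forces
   "w y <= c" is a dilation invariant generalised limit.  A functional below pi_fun has
   this property, and so does y |-> lim_G pi_avg y for any ultrafilter G refining
   N -> oo; choosing G to contain {N | c < pi_avg x N} for some 0 < c < pi_fun x
   gives (2). *)

From HB Require Import structures.
From mathcomp Require Import all_boot all_order all_algebra.
From mathcomp Require Import all_classical all_reals all_analysis.
From mathcomp Require Import measurable_realfun ring.
Import Order.TTheory GRing.Theory Num.Theory.
Import numFieldNormedType.Exports.
Local Open Scope classical_set_scope.
Local Open Scope ring_scope.
Set Implicit Arguments. Unset Strict Implicit. Unset Printing Implicit Defensive.

Section Filters.
Variable R : realType.

Lemma limf_esup_le (F : set_system R) (f : R -> R) (c : R) :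
  (\forall N \near F, f N <= c) -> (limf_esup (fun N => (f N)%:E) F <= c%:E)%E.
Proof.
move=> fc; rewrite limf_esupE.
apply: (@le_trans _ _ (ereal_sup ((fun N => (f N)%:E) @` [set N | f N <= c]))).
  by apply: ereal_inf_lbound; exists [set N | f N <= c].
by apply: ge_ereal_sup => _ [N fNc <-]; rewrite lee_fin.
Qed.

Lemma limf_esup_gt (F : set_system R) (f : R -> R) (c : R) :
  (c%:E < limf_esup (fun N => (f N)%:E) F)%E ->
  forall V, F V -> exists N, V N /\ c < f N.
Proof.
move=> cf V FV.
have : (limf_esup (fun N => (f N)%:E) F <= ereal_sup ((fun N => (f N)%:E) @` V))%E.
  by rewrite limf_esupE; apply: ereal_inf_lbound; exists V.
move=> /(lt_le_trans cf) /ereal_sup_gt [_ [N VN <-]] cfN.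
by exists N; rewrite -lte_fin.
Qed.

Lemma ultra_refine_meets {T : Type} (F : set_system T) (S : set T) : Filter F ->
  (forall V, F V -> exists N, V N /\ S N) ->
  exists G, [/\ UltraFilter G, F `<=` G & G S].
Proof.
move=> FF FS.
have FSP : ProperFilter (within S F).
  apply: Build_ProperFilter_ex => P FP.
  by have [N [PN SN]] := FS _ FP; exists N; exact: PN.
have [G [GU FSG]] := ultraFilterLemma FSP.
exists G; split => //.
- by move=> A FA; apply: FSG; apply: filterS FA => N AN _.
- by apply: FSG; apply: nearW.
Qed.

Lemma ultra_bounded_cvg {T : Type} (G : set_system T) (f : T -> R) (C : R) :
  UltraFilter G -> (\forall N \near G, `|f N| <= C) -> cvg (f @ G).
Proof.
move=> GU fC.
have GP : ProperFilter G := @ultra_proper _ _ GU.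
have : (f @ G) [set` `[-C, C]].
  by apply: filterS fC => N; rewrite /= in_itv /= -ler_norml.
move=> /(@segment_compact R (- C) C (f @ G) (fmap_proper_filter f GP)) [p [_ Gp]].
apply/cvg_ex; exists p => B Bp.
have [//|GnB] := in_ultra_setVsetC (f @^-1` B) GU.
have [z [/= nBz Bz]] := Gp (~` B) B (ltac:(by move: GnB; rewrite preimage_setC)) Bp.
by case: nBz.
Qed.

Lemma lim_near_eq {T : Type} (G : set_system T) (f g : T -> R) (l : R) :
  ProperFilter G -> f @ G --> l -> (\forall N \near G, f N = g N) -> lim (g @ G) = l.
Proof. by move=> GP fl fg; apply/cvg_lim => //; exact: cvg_trans (near_eq_cvg fg) fl. Qed.

End Filters.

#[local] Instance ae_lebesgue_filter {R : realType} :
  Filter (nbhs (almost_everywhere (@lebesgue_measure R))).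
Proof. exact: ae_filter_ringOfSetsType. Qed.

Section LinfFunctions.
Variable R : realType.
Local Notation mu := (@lebesgue_measure R).

Lemma ae_posS (P Q : R -> Prop) : (forall t, 0 < t -> P t -> Q t) ->
  ae_pos P -> ae_pos Q.
Proof. by move=> PQ; rewrite /ae_pos; apply: filterS => t Pt t0; apply: PQ (Pt t0). Qed.

Lemma ae_posS2 (P Q S : R -> Prop) : (forall t, 0 < t -> P t -> Q t -> S t) ->
  ae_pos P -> ae_pos Q -> ae_pos S.
Proof.
by move=> PQS; rewrite /ae_pos; apply: filterS2 => t Pt Qt t0; apply: PQS (Pt t0) (Qt t0).
Qed.

Lemma Linf_comb (a : R) (y1 y2 : R -> R) : Linf y1 -> Linf y2 ->
  Linf (fun t => a * y1 t + y2 t).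
Proof.
move=> [m1 [C1 y1C]] [m2 [C2 y2C]]; split.
  by apply: measurable_funD => //; apply: measurable_funM.
exists (`|a| * C1 + C2); apply: ae_posS2 y1C y2C => t _ y1t y2t.
by rewrite (le_trans (ler_normD _ _))// lerD// normrM ler_wpM2l.
Qed.

Lemma Linf_cst (c : R) : Linf (fun _ => c).
Proof. by split; [exact: measurable_cst | exists `|c|; apply: aeW]. Qed.

Lemma Linf_max0 (y : R -> R) : Linf y -> Linf (fun t => Num.max (y t) 0).
Proof.
move=> [my [C yC]]; split; first exact: measurable_maxr.
exists `|C|; apply: ae_posS yC => t _ yt.
by rewrite /Num.max; case: ifP => _; [rewrite normr0 | exact: le_trans yt (ler_norm C)].
Qed.

Lemma Linf_opp_max0 (y : R -> R) : Linf y -> Linf (fun t => Num.max (- y t) 0).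
Proof.
move=> Ly; have := Linf_max0 (Linf_comb (-1) Ly (Linf_cst 0)).
by congr Linf; apply/funext => t; rewrite mulN1r addr0.
Qed.

Lemma lebesgue_measure_preimage_div (k : R) (A : set R) : 0 < k -> measurable A ->
  mu ((fun s => s / k) @^-1` A) = (k%:E * mu A)%E.
Proof.
move=> k0 mA.
pose phi : measurableTypeR R -> measurableTypeR R := fun s => s / k.
have mphi : measurable_fun setT phi by apply: measurable_funM.
have k1 : 0 <= k^-1 by rewrite invr_ge0 ltW.
have := @lebesgue_measure_unique R (mscale (NngNum k1) (pushforward mu phi)).
move=> /(_ mphi) unique_mu.
have := unique_mu _ A mA; rewrite /mscale /pushforward /= => ->.
  by rewrite muleA -EFinM mulfV ?mul1e // gt_eqF.
move=> _ [[x1 x2] _ <-]; rewrite /mscale /pushforward /=.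
have -> : pushforward mu phi `]x1, x2] = mu `]x1 * k, x2 * k].
  congr (mu _); apply/seteqP; split=> s;
  by rewrite /phi /= !in_itv /= ltr_pdivlMr // ler_pdivrMr.
rewrite !lebesgue_measure_itv /= !lte_fin ltr_pM2r //.
case: ifP => _; last by rewrite mule0.
by rewrite -!EFinB -EFinM -mulrBl mulrCA mulVf ?mulr1 // gt_eqF.
Qed.

Lemma Linf_comp_div (k : R) (y : R -> R) : 0 < k -> Linf y -> Linf (fun t => y (t / k)).
Proof.
move=> k0 [my [C yC]].
have mphi : measurable_fun setT (fun s : R => s / k) by apply: measurable_funM.
split.
  apply: (measurable_comp _ _ my) => //; last exact: measurable_funS mphi.
  by move=> _ [t + <-]; rewrite /= !in_itv /= !andbT => t0; exact: divr_gt0.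
exists C; move: yC => -[N [mN N0 yCN]].
exists ((fun s : R => s / k) @^-1` N); split.
- by rewrite -[X in measurable X]setTI; exact: mphi.
- by rewrite lebesgue_measure_preimage_div // N0 mule0.
- move=> t /= nyCt; apply: yCN => /= yCt; apply: nyCt => t0; apply: yCt.
  exact: divr_gt0.
Qed.

End LinfFunctions.

Section LogIntegral.
Variable R : realType.
Local Notation mu := (@lebesgue_measure R).

Definition logint (y : R -> R) (a b : R) := Rintegral mu `[a, b] (fun s => y s / s).

Lemma itv_pos_sub (a b : R) : 0 < a -> `[a, b] `<=` (`]0, +oo[ : set R).
Proof.
by move=> a0 x /=; rewrite !in_itv /= andbT => /andP[ax _]; exact: lt_le_trans ax.
Qed.

Lemma itv_pos_gt0 (a b t : R) : 0 < a -> [set` `[a, b]] t -> 0 < t.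
Proof. by move=> a0 /(itv_pos_sub a0); rewrite /= in_itv /= andbT. Qed.

Lemma measurable_logint_fun (y : R -> R) (a b : R) : Linf y -> 0 < a ->
  measurable_fun `[a, b] (fun s => y s / s).
Proof.
move=> [my _] a0.
have minv : measurable_fun (`]0, +oo[ : set R) (fun s => s^-1).
  apply: open_continuous_measurable_fun; first exact: interval_open.
  by move=> x; rewrite inE /= in_itv /= andbT => x0; apply: inv_continuous; rewrite gt_eqF.
have sub := itv_pos_sub (b := b) a0.
by apply: measurable_funM; [exact: measurable_funS sub my | exact: measurable_funS sub minv].
Qed.

Lemma integrable_logint_fun (y : R -> R) (a b : R) : Linf y -> 0 < a ->
  mu.-integrable `[a, b] (EFin \o (fun s => y s / s)).
Proof.
move=> Ly a0; have my := measurable_logint_fun (b := b) Ly a0.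
have [_ [C yC]] := Ly.
apply/integrableP; split; first exact/measurable_EFinP.
apply: (@le_lt_trans _ _ ((`|C| / a)%:E * mu `[a, b])%E).
  apply: integral_le_bound => //; first exact/measurable_EFinP.
    by rewrite lee_fin divr_ge0// ltW.
  move: yC; rewrite /ae_pos; apply: filterS => t yCt tab; have t0 := itv_pos_gt0 a0 tab.
  rewrite /= lee_fin normrM normfV (gtr0_norm t0) ler_pdivrMr//.
  rewrite (le_trans (yCt t0))// (le_trans (ler_norm C))//.
  rewrite -mulrA ler_peMr// mulrC ler_pdivlMr// mul1r.
  by move: tab; rewrite /= in_itv /= => /andP[].
rewrite lebesgue_measure_itv.
by case: ifP => _; [rewrite /= -EFinB -EFinM ltry | rewrite mule0 ltry].
Qed.

Lemma logint_comb (c : R) (y1 y2 : R -> R) (a b : R) : Linf y1 -> Linf y2 -> 0 < a ->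
  logint (fun t => c * y1 t + y2 t) a b = c * logint y1 a b + logint y2 a b.
Proof.
move=> L1 L2 a0; rewrite /logint.
rewrite (@eq_Rintegral _ _ _ mu _ (fun s => c * (y1 s / s) + y2 s / s)); last first.
  by move=> s _; rewrite mulrDl mulrA.
have i1 : mu.-integrable `[a, b] (EFin \o (fun s => c * (y1 s / s))).
  have := integrable_logint_fun b (Linf_comb c L1 (Linf_cst 0)) a0.
  apply: eq_integrable => //.
  by move=> s _ /=; rewrite addr0 mulrA.
rewrite RintegralD //; last exact: integrable_logint_fun.
by rewrite RintegralZl //; exact: integrable_logint_fun.
Qed.

Lemma logint_ge0 (y : R -> R) (a b : R) : Linf y -> 0 < a ->
  ae_pos (fun t => a <= t -> 0 <= y t) -> 0 <= logint y a b.
Proof.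
move=> Ly a0 y0; rewrite /logint /Rintegral.
have -> : (\int[mu]_(x in `[a, b]) (y x / x)%:E =
    \int[mu]_(x in `[a, b]) (Num.max (y x / x) 0)%:E)%E.
  apply: ae_eq_integral => //.
  - by apply/measurable_EFinP; exact: measurable_logint_fun.
  - apply/measurable_EFinP; apply: measurable_maxr; last exact: measurable_cst.
    exact: measurable_logint_fun.
  move: y0; rewrite /ae_pos; apply: filterS => t yt0 tab; have t0 := itv_pos_gt0 a0 tab.
  have at_ : a <= t by move: tab; rewrite /= in_itv /= => /andP[].
  by congr (_%:E); apply/esym/max_idPl; apply: divr_ge0; [exact: yt0 | exact: ltW].
by apply: fine_ge0; apply: integral_ge0 => s _; rewrite lee_fin le_max lexx orbT.
Qed.

Lemma logint_le (y z : R -> R) (a b : R) : Linf y -> Linf z -> 0 < a ->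
  ae_pos (fun t => a <= t -> y t <= z t) -> logint y a b <= logint z a b.
Proof.
move=> Ly Lz a0 yz.
have := @logint_ge0 (fun t => -1 * y t + z t) a b (Linf_comb _ Ly Lz) a0.
rewrite logint_comb // mulN1r addrC subr_ge0; apply.
by apply: ae_posS yz => t _ yzt /yzt; rewrite mulN1r addrC subr_ge0.
Qed.

Lemma logint_cst (c a b : R) : 0 < a ->
  logint (fun _ => c) a b = c * logint (fun _ => 1) a b.
Proof.
move=> a0; have one_int := integrable_logint_fun b (Linf_cst 1) a0.
rewrite /logint -RintegralZl //.
by apply: eq_Rintegral => s _; rewrite mulrA mulr1.
Qed.

Lemma logint_one (a b : R) : 0 < a -> a < b -> logint (fun _ => 1) a b = ln b - ln a.
Proof.
move=> a0 ab; rewrite /logint /Rintegral.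
rewrite (_ : ln b - ln a = fine ((ln b)%:E - (ln a)%:E)%E) //; congr fine.
transitivity (\int[mu]_(x in `[a, b]) (x^-1)%:E)%E.
  by apply: eq_integral => s _; rewrite mul1r.
have ln_derive x : a < x -> is_derive x 1 (@ln R) x^-1.
  by move=> ax; apply: is_derive1_ln (lt_trans a0 ax).
apply: (@continuous_FTC2 _ _ (@ln R) a b ab).
- apply: continuous_in_subspaceT => x xab; apply: inv_continuous.
  by rewrite gt_eqF // (itv_pos_gt0 a0 (set_mem xab)).
- split.
  + move=> x; rewrite /= in_itv /= => /andP[/ln_derive dx _].
    exact: (@ex_derive _ _ _ _ _ _ _ dx).
  + by apply: cvg_at_right_filter; apply: continuous_ln; exact: a0.
  + by apply: cvg_at_left_filter; apply: continuous_ln; exact: lt_trans ab.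
- by move=> x; rewrite /= in_itv /= => /andP[/ln_derive dx _]; rewrite derive1E derive_val.
Qed.

Lemma logint_split (y : R -> R) (a b c : R) : Linf y -> 0 < a -> a <= b -> b <= c ->
  logint y a c = logint y a b + logint y b c.
Proof.
move=> Ly a0 ab bc; rewrite /logint.
have iac := integrable_logint_fun c Ly a0.
have := @Rintegral_itvB R (fun s => y s / s) (BLeft a) (BRight c) b iac.
rewrite !bnd_simp => /(_ ab bc) itvB.
rewrite -[X in _ = _ + X]Rintegral_itv_obnd_cbnd; first by rewrite -itvB addrC subrK.
apply: integrableS iac => // t; rewrite /= !in_itv /= => /andP[bt ->].
by rewrite (le_trans ab (ltW bt)).
Qed.

Lemma logint_norm_le (C : R) y (a b : R) : Linf y -> 0 < a -> a <= b ->
  ae_pos (fun t => `|y t| <= C) -> `|logint y a b| <= C * (ln b - ln a).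
Proof.
move=> Ly a0 ab yC; have [<-|neq_ab] := eqVneq a b.
  by rewrite subrr mulr0 /logint set_itv1 Rintegral_set1 normr0.
have {neq_ab} ab' : a < b by rewrite lt_neqAle neq_ab ab.
have yC' : ae_pos (fun t => a <= t -> - C <= y t <= C).
  by apply: ae_posS yC => t _; rewrite ler_norml.
rewrite -logint_one // -logint_cst // ler_norml; apply/andP; split.
  rewrite logint_cst // -mulNr -logint_cst //.
  apply: logint_le => //; first exact: Linf_cst.
  by apply: ae_posS yC' => t _ yt /yt /andP[].
apply: logint_le => //; first exact: Linf_cst.
by apply: ae_posS yC' => t _ yt /yt /andP[].
Qed.

(* The substitution s = k u: the pushforward formula for integrals is used for nonnegative
   integrands, the general case follows by splitting into positive and negative parts. *)
Lemma logint_comp_div_ge0 (k : R) (y : R -> R) (a b : R) : 0 < k -> Linf y ->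
  (forall t, 0 <= y t) -> 0 < a ->
  logint (fun t => y (t / k)) a b = logint y (a / k) (b / k).
Proof.
move=> k0 Ly y0 a0; have ak0 : 0 < a / k by exact: divr_gt0.
rewrite /logint /Rintegral; congr fine.
pose phi : measurableTypeR R -> measurableTypeR R := fun s => s / k.
have mphi : measurable_fun setT phi by apply: measurable_funM.
pose g : R -> R := fun u => y u / u / k.
have mg : measurable_fun `[a / k, b / k] (EFin \o g).
  by apply/measurable_EFinP; apply: measurable_funM; [exact: measurable_logint_fun|].
have g0 u : [set` `[a / k, b / k]] u -> (0 <= (EFin \o g) u)%E.
  move=> uab; have u0 := itv_pos_gt0 ak0 uab.
  by rewrite /= lee_fin /g !divr_ge0 // ltW.
have preim : phi @^-1` `[a / k, b / k] = [set` `[a, b]].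
  by apply/seteqP; split=> s; rewrite /phi /= !in_itv /= !ler_pdivrMr // !divfK // gt_eqF.
transitivity (\int[mu]_(x in phi @^-1` `[(a / k)%R, (b / k)%R]) ((EFin \o g) \o phi) x)%E.
  rewrite preim; apply: eq_integral => s /set_mem sab; rewrite /= /g /phi.
  have s0 := itv_pos_gt0 a0 sab.
  by congr (_%:E); rewrite -mulrA invf_div mulrAC mulfV ?gt_eqF // mul1r.
rewrite -ge0_integral_pushforward //; last by move=> u /set_mem /g0.
have k_ge0 : 0 <= k by exact: ltW.
transitivity
  (\int[mscale (NngNum k_ge0) mu]_(x in `[(a / k)%R, (b / k)%R]) (EFin \o g) x)%E.
  apply: eq_measure_integral => A mA _; rewrite /mscale /pushforward /=.
  exact: lebesgue_measure_preimage_div.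
rewrite ge0_integral_mscale //= -ge0_integralZl //.
by apply: eq_integral => u _; rewrite /g /= -EFinM mulrC divfK // gt_eqF.
Qed.

Lemma max0_decomp (x : R) : x = -1 * Num.max (- x) 0 + Num.max x 0.
Proof.
rewrite /Num.max oppr_lt0.
by have [x0|x0|->] := ltrgtP x 0; rewrite ?x0 ?(lt_gtF x0) ?oppr0 ?mulr0 ?addr0; ring.
Qed.

Lemma logint_comp_div (k : R) (y : R -> R) (a b : R) : 0 < k -> Linf y -> 0 < a ->
  logint (fun t => y (t / k)) a b = logint y (a / k) (b / k).
Proof.
move=> k0 Ly a0; have ak0 : 0 < a / k by exact: divr_gt0.
pose yp t := Num.max (y t) 0; pose ym t := Num.max (- y t) 0.
have Lp : Linf yp := Linf_max0 Ly.
have Lm : Linf ym := Linf_opp_max0 Ly.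
have yE : y = (fun t => -1 * ym t + yp t) by apply/funext => t; exact: max0_decomp.
rewrite [in LHS]yE logint_comb //; try exact: Linf_comp_div.
rewrite !logint_comp_div_ge0 // => [|t|t]; last 2 first.
- by rewrite /yp le_max lexx orbT.
- by rewrite /ym le_max lexx orbT.
by rewrite [in RHS]yE logint_comb.
Qed.

End LogIntegral.

Section PiAverage.
Variable R : realType.

Lemma ln_gt_of_expR_lt (K x : R) : expR K < x -> K < ln x.
Proof.
move=> Kx; have x0 : 0 < x := lt_trans (expR_gt0 K) Kx.
by rewrite -[X in X < _](expRK K) ltr_ln // posrE expR_gt0.
Qed.

Section LargeN.
Variable N : R.
Hypothesis N_gt_e : expR 1 < N.

Let N_gt0 : 0 < N. Proof. exact: lt_trans (expR_gt0 1) N_gt_e. Qed.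
Let lnN_gt1 : 1 < ln N. Proof. exact: ln_gt_of_expR_lt. Qed.
Let lnN_gt0 : 0 < ln N. Proof. exact: lt_trans ltr01 lnN_gt1. Qed.
Let lnlnN_gt0 : 0 < ln (ln N). Proof. exact: ln_gt0. Qed.
#[local] Hint Resolve N_gt0 lnN_gt0 lnlnN_gt0 : core.

Lemma pi_avgE (y : R -> R) : pi_avg y N = (ln (ln N))^-1 * logint y N (N * ln N).
Proof. by []. Qed.

Lemma pi_avg_comb (c : R) (y1 y2 : R -> R) : Linf y1 -> Linf y2 ->
  pi_avg (fun t => c * y1 t + y2 t) N = c * pi_avg y1 N + pi_avg y2 N.
Proof. by move=> L1 L2; rewrite !pi_avgE logint_comb // mulrDr mulrCA. Qed.

Lemma pi_avg_cst (c : R) : pi_avg (fun _ => c) N = c.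
Proof.
rewrite pi_avgE logint_cst // logint_one //; last by rewrite ltr_pMr.
by rewrite lnM ?posrE // addrC addKr mulrCA mulVf ?mulr1 // gt_eqF.
Qed.

Lemma pi_avg_le (T : R) (y z : R -> R) : Linf y -> Linf z -> T < N ->
  ae_pos (fun t => T < t -> y t <= z t) -> pi_avg y N <= pi_avg z N.
Proof.
move=> Ly Lz TN yz; rewrite !pi_avgE; apply: ler_wpM2l; first by rewrite invr_ge0 ltW.
apply: logint_le => //; apply: ae_posS yz => t _ yzt Nt.
by apply: yzt; exact: lt_le_trans TN Nt.
Qed.

Lemma pi_avg_norm_le (T C : R) (y : R -> R) : Linf y -> T < N ->
  ae_pos (fun t => T < t -> `|y t| <= C) -> `|pi_avg y N| <= C.
Proof.
move=> Ly TN yC; have yC' : ae_pos (fun t => T < t -> - C <= y t <= C).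
  by apply: ae_posS yC => t _ yCt /yCt; rewrite ler_norml.
rewrite ler_norml -[X in X <= _ <= _](pi_avg_cst (- C)).
rewrite -[X in _ <= _ <= X](pi_avg_cst C).
apply/andP; split; apply: (pi_avg_le (T := T)) => //; try exact: Linf_cst;
  by apply: ae_posS yC' => t _ yCt /yCt /andP[].
Qed.

Lemma pi_avg_dilation (n : nat) (y : R -> R) (C : R) : (0 < n)%N -> Linf y ->
  ae_pos (fun t => `|y t| <= C) -> n%:R <= ln N ->
  `|pi_avg (dilation n y) N - pi_avg y N| <= (ln (ln N))^-1 * (2 * C * ln n%:R).
Proof.
move=> n0 Ly yC nN.
have k0 : 0 < (n%:R : R) by rewrite ltr0n.
have k1 : 1 <= (n%:R : R) by rewrite ler1n.
set k : R := n%:R in k0 k1 nN *; set M := N * ln N.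
have M0 : 0 < M by rewrite mulr_gt0.
have Nk0 : 0 < N / k by exact: divr_gt0.
have Nk_N : N / k <= N by rewrite ler_pdivrMr // ler_peMr // ltW.
have N_Mk : N <= M / k by rewrite ler_pdivlMr // /M ler_pM2l.
have Mk_M : M / k <= M by rewrite ler_pdivrMr // ler_peMr // ltW.
have ln_ratio x : 0 < x -> ln x - ln (x / k) = ln k.
  by move=> x0; rewrite ln_div ?posrE // opprB addrC subrK.
(* [N/k, N] and [M/k, M] have logarithmic length ln k; the rest cancels. *)
rewrite !pi_avgE -/M -mulrBr normrM gtr0_norm ?invr_gt0 //.
apply: ler_wpM2l; first by rewrite invr_ge0 ltW.
rewrite /dilation logint_comp_div // -/k (logint_split Ly Nk0 Nk_N N_Mk).
rewrite (@logint_split _ y N (M / k) M) //.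
rewrite [X in `|X|](_ : _ = logint y (N / k) N - logint y (M / k) M); last by ring.
rewrite (le_trans (ler_normB _ _)) //.
rewrite (_ : 2 * C * ln k = C * ln k + C * ln k); last by ring.
apply: lerD; [rewrite -(ln_ratio N) | rewrite -(ln_ratio M)] => //;
  apply: logint_norm_le => //.
exact: lt_le_trans Nk0 (le_trans Nk_N N_Mk).
Qed.

End LargeN.

Lemma near_pinfty_gt (K : R) : \forall N \near +oo%R, K < N.
Proof. by apply: nbhs_pinfty_gt; rewrite num_real. Qed.

Lemma near_pinfty_large (P : R -> Prop) : (forall N, expR 1 < N -> P N) ->
  \forall N \near +oo%R, P N.
Proof. by move=> PN; apply: filterS (near_pinfty_gt (expR 1)). Qed.

Lemma pi_avg_comb_near (c : R) (y1 y2 : R -> R) : Linf y1 -> Linf y2 ->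
  \forall N \near +oo%R,
    pi_avg (fun t => c * y1 t + y2 t) N = c * pi_avg y1 N + pi_avg y2 N.
Proof. by move=> L1 L2; apply: near_pinfty_large => N N_gt_e; exact: pi_avg_comb. Qed.

Lemma pi_avg_cst_near (c : R) : \forall N \near +oo%R, pi_avg (fun _ => c) N = c.
Proof. by apply: near_pinfty_large => N N_gt_e; exact: pi_avg_cst. Qed.

Lemma pi_avg_le_near (y z : R -> R) : Linf y -> Linf z ->
  ae_pos (fun t => y t <= z t) -> \forall N \near +oo%R, pi_avg y N <= pi_avg z N.
Proof.
move=> Ly Lz yz; apply: near_pinfty_large => N N_gt_e.
apply: (@pi_avg_le N N_gt_e 0) => //; first exact: lt_trans (expR_gt0 1) N_gt_e.
by apply: ae_posS yz => t _ yzt _.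
Qed.

Lemma pi_avg_norm_le_near (T C : R) (y : R -> R) : Linf y ->
  ae_pos (fun t => T < t -> `|y t| <= C) -> \forall N \near +oo%R, `|pi_avg y N| <= C.
Proof.
move=> Ly yC; near=> N.
have N_gt_e : expR 1 < N by near: N; exact: near_pinfty_gt.
by apply: (@pi_avg_norm_le N N_gt_e T) => //; near: N; exact: near_pinfty_gt.
Unshelve. all: by end_near.
Qed.

Lemma pi_avg_dilation_near (n : nat) (y : R -> R) (e : R) : (0 < n)%N -> Linf y ->
  0 < e -> \forall N \near +oo%R, `|pi_avg (dilation n y) N - pi_avg y N| <= e.
Proof.
move=> n0 Ly e0; have [_ [C yC]] := Ly.
have yC' : ae_pos (fun t => `|y t| <= `|C|).
  by apply: ae_posS yC => t _ yCt; exact: le_trans yCt (ler_norm C).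
near=> N.
have N_gt_e : expR 1 < N by near: N; exact: near_pinfty_gt.
have nN : n%:R <= ln N.
  by apply/ltW/ln_gt_of_expR_lt; near: N; exact: near_pinfty_gt.
have lnlnN_large : 2 * `|C| * ln n%:R / e < ln (ln N).
  by apply/ln_gt_of_expR_lt/ln_gt_of_expR_lt; near: N; exact: near_pinfty_gt.
have lnlnN_gt0 : 0 < ln (ln N) by apply/ln_gt0/ln_gt_of_expR_lt.
apply: le_trans (pi_avg_dilation N_gt_e n0 Ly yC' nN) _.
by rewrite mulrC ler_pdivrMr //; apply/ltW; rewrite -ltr_pdivrMl // mulrC.
Unshelve. all: by end_near.
Qed.

End PiAverage.

Section PiDominated.
Variables (R : realType) (w : (R -> R) -> R).
Hypothesis w_linear : Linf_linear w.
Hypothesis w_le : forall y c, Linf y ->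
  (\forall N \near +oo%R, pi_avg y N <= c) -> w y <= c.

Let w_comb := w_linear.2.

Let w_cst0 : w (fun _ => 0) = 0.
Proof.
have := w_comb 1 (Linf_cst 0) (Linf_cst 0).
rewrite (_ : (fun _ => 1 * 0 + 0) = fun _ => 0); last first.
  by apply/funext => t; rewrite mulr0 addr0.
by rewrite mul1r => w00; apply: (addrI (w (fun _ => 0))); rewrite addr0 -w00.
Qed.

Lemma pi_dominated_ge (y : R -> R) (c : R) : Linf y ->
  (\forall N \near +oo%R, c <= pi_avg y N) -> c <= w y.
Proof.
move=> Ly cy; have Lmy := Linf_comb (-1) Ly (Linf_cst 0).
have := w_le (c := - c) Lmy; rewrite w_comb //; last exact: Linf_cst.
rewrite w_cst0 addr0 mulN1r lerN2; apply.
apply: filterS3 cy (pi_avg_comb_near (-1) Ly (Linf_cst 0)) (pi_avg_cst_near 0).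
by move=> N cyN -> ->; rewrite addr0 !mulN1r lerN2.
Qed.

Lemma pi_dominated_eq (y z : R -> R) : Linf y -> Linf z ->
  (forall e, 0 < e -> \forall N \near +oo%R, `|pi_avg z N - pi_avg y N| <= e) ->
  w z = w y.
Proof.
move=> Ly Lz yz; have Ld := Linf_comb (-1) Ly Lz.
suff : `|w (fun t => -1 * y t + z t)| <= 0.
  by rewrite normr_le0 w_comb // mulN1r addrC subr_eq0 => /eqP.
apply/ler_addgt0Pr => e e0; rewrite add0r ler_norml; apply/andP; split.
  apply: pi_dominated_ge => //; apply: filterS2 (yz e e0) (pi_avg_comb_near (-1) Ly Lz).
  by move=> N + ->; rewrite mulN1r addrC ler_norml => /andP[].
apply: w_le => //; apply: filterS2 (yz e e0) (pi_avg_comb_near (-1) Ly Lz).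
by move=> N + ->; rewrite mulN1r addrC ler_norml => /andP[].
Qed.

Lemma pi_dominated_gen_limit : gen_limit w /\ dilation_invariant w.
Proof.
split; last first.
  move=> n y n0 Ly; apply: pi_dominated_eq => //.
    by apply: Linf_comp_div => //; rewrite ltr0n.
  by move=> e e0; exact: pi_avg_dilation_near.
split=> //; split.
  move=> y Ly y0; apply: pi_dominated_ge => //.
  apply: filterS2 (pi_avg_cst_near 0) (pi_avg_le_near (Linf_cst 0) Ly y0).
  by move=> N ->.
split.
  apply/eqP; rewrite eq_le; apply/andP; split.
    by apply: w_le; [exact: Linf_cst | apply: filterS (pi_avg_cst_near 1) => N ->].
  by apply: pi_dominated_ge; [exact: Linf_cst | apply: filterS (pi_avg_cst_near 1) => N ->].
move=> y Ly y_vanish; rewrite -w_cst0; apply: pi_dominated_eq => //; first exact: Linf_cst.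
move=> e e0; have [T yT] := y_vanish e e0.
apply: filterS2 (pi_avg_cst_near 0) (pi_avg_norm_le_near Ly yT).
by move=> N ->; rewrite subr0.
Qed.

End PiDominated.

Section UltraLimit.
Variables (R : realType) (G : set_system R).
Hypotheses (G_ultra : UltraFilter G)
  (pinfty_G : forall A, (\forall N \near +oo%R, A N) -> G A).

Let G_proper : ProperFilter G := ultra_proper.

Definition pi_ulim (y : R -> R) : R := lim (pi_avg y @ G).

Lemma pi_ulim_cvg (y : R -> R) : Linf y -> pi_avg y @ G --> pi_ulim y.
Proof.
move=> Ly; have [_ [C yC]] := Ly; apply: (ultra_bounded_cvg (C := C) G_ultra).
by apply/pinfty_G/(pi_avg_norm_le_near (T := 0) Ly); apply: ae_posS yC.
Qed.

Lemma pi_ulim_linear : Linf_linear pi_ulim.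
Proof.
split=> [y1 y2 L1 L2 y12 | a y1 y2 L1 L2].
  apply: (lim_near_eq G_proper (pi_ulim_cvg L2)); apply: pinfty_G.
  have y12_le : ae_pos (fun t => y1 t <= y2 t) by apply: ae_posS y12 => t _ ->.
  have y21_le : ae_pos (fun t => y2 t <= y1 t) by apply: ae_posS y12 => t _ ->.
  apply: filterS2 (pi_avg_le_near L2 L1 y21_le) (pi_avg_le_near L1 L2 y12_le) => N *.
  by apply/eqP; rewrite eq_le; apply/andP.
apply: (@lim_near_eq _ _ G (fun N => a * pi_avg y1 N + pi_avg y2 N)) => //.
  by apply: cvgD; [exact: cvgMl_tmp (pi_ulim_cvg L1) | exact: pi_ulim_cvg].
by apply: pinfty_G; apply: filterS (pi_avg_comb_near a L1 L2) => N ->.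
Qed.

Lemma pi_ulim_le (y : R -> R) (c : R) : Linf y ->
  (\forall N \near +oo%R, pi_avg y N <= c) -> pi_ulim y <= c.
Proof. by move=> Ly yc; apply: limr_le; [exact: pi_ulim_cvg | exact: pinfty_G]. Qed.

End UltraLimit.

Lemma ereal_gt0_gt_fin (R : realType) (e : \bar R) :
  (0 < e)%E -> exists2 c : R, 0 < c & (c%:E < e)%E.
Proof.
case: e => [r|_|//]; last by exists 1; rewrite ?ltry.
rewrite lte_fin => r0; exists (r / 2); first by rewrite divr_gt0.
by rewrite lte_fin ltr_pdivrMr // ltr_pMr // ltr1n.
Qed.

Theorem lemma1p4 (R : realType) :
  (forall w : (R -> R) -> R, Linf_dual w ->
     (forall y, Linf y -> ((w y)%:E <= pi_fun y)%E) ->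
     gen_limit w /\ dilation_invariant w) /\
  (forall x : R -> R, Linf x -> ae_pos (fun t => 0 <= x t) ->
     (0 < pi_fun x)%E ->
     exists w : (R -> R) -> R,
       gen_limit w /\ dilation_invariant w /\ 0 < w x).
Proof.
split=> [w [w_linear _] w_le_pi | x Lx _ x_pos].
  apply: (@pi_dominated_gen_limit R w w_linear) => y c Ly yc.
  by rewrite -lee_fin (le_trans (w_le_pi y Ly)) // limf_esup_le.
have [c c0 cx] := ereal_gt0_gt_fin x_pos.
have [G [G_ultra pinfty_G G_cx]] := ultra_refine_meets _ (limf_esup_gt cx).
have [gen_lim dil_inv] :=
  pi_dominated_gen_limit (pi_ulim_linear G_ultra pinfty_G) (pi_ulim_le G_ultra pinfty_G).
exists (pi_ulim G); do 2!split => //.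
apply: lt_le_trans c0 (limr_ge (pi_ulim_cvg G_ultra pinfty_G Lx) _).
by apply: filterS G_cx => N /ltW.
Qed.
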